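(* Consider the covariate-adaptive randomization design described in the context with $I=2$ covariates, each having 2 levels, and nonnegative weights $w_{o}, w_{m,1}, w_{m,2}, w_{s}$ summing to 1. Assume further that $w_{m,1}=w_{m,2}=:w_{m}$. Then the condition ''with $u_{1}=1$, $u_{2}=w_{o}+w_{m,1}$, $u_{3}=w_{o}+w_{m,2}$, $u_{4}=w_{o}$, the solution $\mathbf{x}=(x_1,x_2,x_3)$ of \[ \begin{pmatrix} u_{1} & u_{2} & u_{3}\\ u_{2} & u_{1} & u_{4}\\ u_{3} & u_{4} & u_{1}\end{pmatrix} \begin{pmatrix} x_{1}\\ x_{2}\\ x_{3}\end{pmatrix} =\begin{pmatrix} u_{4}\\ u_{3}\\ u_{2}\end{pmatrix} \] satisfies $|x_{1}|+|x_{2}|+|x_{3}|<1$'' is equivalent to \[ w_{m}<C(w_{o}):=\frac{\sqrt{(1-w_{o})^{2}+4(1+w_{o})^{2}}-1-3w_{o}}{4}. \] Hence, if in addition $w_s>0$, the chain $(\mathbf{D}_n)_{n\ge1}$ of within-stratum imbalances is a positive recurrent Markov chain with period 2 on $\mathbb{Z}^4$ whenever $w_m<C(w_o)$.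
   Context: Two treatments (1 and 2) are compared; patients arrive sequentially. There are $I$ covariates, covariate $i$ having $m_i$ levels; a stratum is a covariate profile $(k_1,\ldots,k_I)$ and a margin $(i;k_i)$ is the set of patients whose $i$th covariate is at level $k_i$. Covariate profiles are i.i.d. multinomial over strata. After $n-1$ patients, $D_{n-1}$, $D_{n-1}(i;k_i)$, $D_{n-1}(k_1,\ldots,k_I)$ are the differences (treatment 1 count minus treatment 2 count) overall, on margin $(i;k_i)$, and within stratum. For a new patient in stratum $(k_1^*,\ldots,k_I^* )$, $\mathit{Imb}_n^{(1)}=w_o[D_{n-1}+1]^2+\sum_i w_{m,i}[D_{n-1}(i;k_i^* )+1]^2+w_s[D_{n-1}(k_1^*,\ldots,k_I^* )+1]^2$ and $\mathit{Imb}_n^{(2)}$ is the same with $-1$ replacing $+1$; the patient is assigned to treatment 1 with probability $q$, $p$, or $1/2$ according as $\mathit{Imb}_n^{(1)}>$, $<$, or $=$ $\mathit{Imb}_n^{(2)}$, where $0<q<p<1$, $p+q=1$ (first patient: probability $1/2$). $\mathbf{D}_n$ is the array of within-stratum differences after $n$ patients. *)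

From HB Require Import structures.
From mathcomp Require Import all_boot all_order all_algebra.
From mathcomp Require Import all_classical all_reals all_analysis.
Set Implicit Arguments. Unset Strict Implicit. Unset Printing Implicit Defensive.
Import Order.TTheory GRing.Theory Num.Theory.
Local Open Scope ring_scope.
Local Open Scope classical_set_scope.
Import numFieldNormedType.Exports.

(* Strata for I = 2 covariates with 2 levels each: a profile (k1, k2). *)
Definition stratum := ('I_2 * 'I_2)%type.
(* A state of the chain D_n: the array of within-stratum differences (Z^4). *)
Definition state := {ffun stratum -> int}.

Definition Cbound (R : realType) (wo : R) : R :=
  (Num.sqrt ((1 - wo) ^+ 2 + 4 * (1 + wo) ^+ 2) - 1 - 3 * wo) / 4.

Section Chain.
Variables (R : realType) (wo wm1 wm2 ws p q : R) (pi : stratum -> R).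

Definition Dall (d : state) : int := \sum_(t : stratum) d t.
Definition Dm1 (d : state) (k : 'I_2) : int := \sum_(t : stratum | t.1 == k) d t.
Definition Dm2 (d : state) (k : 'I_2) : int := \sum_(t : stratum | t.2 == k) d t.

(* Imb_n^{(1)} (e = 1) and Imb_n^{(2)} (e = -1) for a new patient in stratum s
   when the current within-stratum difference array is d. *)
Definition imb (d : state) (s : stratum) (e : int) : R :=
  wo * ((Dall d + e)%:~R) ^+ 2
  + wm1 * ((Dm1 d s.1 + e)%:~R) ^+ 2
  + wm2 * ((Dm2 d s.2 + e)%:~R) ^+ 2
  + ws * ((d s + e)%:~R) ^+ 2.

Definition prob1 (d : state) (s : stratum) : R :=
  if imb d s (-1) < imb d s 1 then q
  else if imb d s 1 < imb d s (-1) then p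
  else 1 / 2.

(* next state: treatment 1 (b = true) adds 1 in stratum s, treatment 2 subtracts 1 *)
Definition next (d : state) (s : stratum) (b : bool) : state :=
  [ffun t => d t + (if t == s then (if b then 1 else -1) else 0)].

Definition pstep (d : state) (s : stratum) (b : bool) : R :=
  pi s * (if b then prob1 d s else 1 - prob1 d s).

Fixpoint nstep (n : nat) (x y : state) : R :=
  match n with
  | 0%N => (x == y)%:R
  | n'.+1 => \sum_(s : stratum) \sum_(b : bool) pstep x s b * nstep n' (next x s b) y
  end.

(* probability that, starting from d, the first visit to z happens at time n *)
Fixpoint hit (z : state) (n : nat) (d : state) : R :=
  match n with
  | 0%N => (d == z)%:R
  | n'.+1 => if d == z then 0
             else \sum_(s : stratum) \sum_(b : bool) pstep d s b * hit z n' (next d s b)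
  end.

Definition firstret (z : state) (n : nat) : R :=
  match n with
  | 0%N => 0
  | n'.+1 => \sum_(s : stratum) \sum_(b : bool) pstep z s b * hit z n' (next z s b)
  end.

Definition irreducible : Prop :=
  forall x y : state, exists n, 0 < nstep n x y.

(* z is positive recurrent: returns a.s., with finite mean return time *)
Definition pos_recurrent (z : state) : Prop :=
  series (firstret z) @ \oo --> (1 : R) /\
  cvg (series (fun n => n%:R * firstret z n) @ \oo).

Definition period_is (k : nat) (z : state) : Prop :=
  (forall n, (0 < n)%N -> 0 < nstep n z z -> (k %| n)%N) /\
  (forall k', (forall n, (0 < n)%N -> 0 < nstep n z z -> (k' %| n)%N) -> (k' %| k)%N).

Definition pos_rec_chain_period (k : nat) : Prop :=
  irreducible /\ (forall z, pos_recurrent z) /\ (forall z, period_is k z).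

End Chain.

(* Part one is linear algebra: for [w_o < 1] the solution has [x2 = x3],
   and with [a = w_o + w_m], [b = w_o], the condition [|x1| + 2 x2 < 1] reduces
   to [4 a^2 + 2 a (1 - b) < (1 + b)^2], which is [w_m < C(w_o)] after taking
   square roots.

   Part two is a Foster-Lyapunov argument for the weighted squared imbalance
   [V = w_o D^2 + w_m sum D(i;k)^2 + w_s sum D(k1,k2)^2].  Assigning a patient
   of stratum [s] changes [V] by [1 +/- 2 g_s], where [4 g_s] is
   [Imb^(1) - Imb^(2)], and the design takes the sign opposite to [g_s] with
   probability [p]; so the mean increment is [1 - 2 (p - q) sum_s pi_s |g_s|].
   Since [V = sum_t D_t g_t], the gaps satisfy [w_s |D|_1 <= 4 sum |g_s|], and
   [V] decreases on average by [1] outside a finite set when [w_s > 0].  This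
   bounds the mean return times; every state is reached along an l1-geodesic,
   and the total [D_n] changes by [+/- 1] at each step, so the period is 2. *)

From Pilot Require Import Defs.
From HB Require Import structures.
From mathcomp Require Import all_boot all_order all_algebra.
From mathcomp Require Import all_classical all_reals all_analysis.
From mathcomp Require Import ring lra zify.
Import Order.TTheory GRing.Theory Num.Theory.
Set Implicit Arguments.
Unset Strict Implicit.
Unset Printing Implicit Defensive.

Local Open Scope ring_scope.
Local Open Scope classical_set_scope.
Import numFieldNormedType.Exports.

Lemma excursion_constant (R : realFieldType) (L C delta : R) :
  0 <= L -> 0 <= C -> 0 < delta ->
  exists2 A, L + 1 <= A & L + C + A * (1 - delta) <= A.
Proof.
move=> L_ge0 C_ge0 delta_gt0; pose A := (L + C) / delta + L + 1; exists A.
  have : 0 <= (L + C) / delta by rewrite divr_ge0 ?addr_ge0 // ltW.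
  by rewrite /A; lra.
have AdeltaE : A * delta = L + C + (L + 1) * delta.
  by rewrite /A 2!mulrDl divfK ?gt_eqF //; ring.
have : 0 <= (L + 1) * delta by rewrite mulr_ge0 ?addr_ge0 // ltW.
by rewrite mulrBr mulr1; lra.
Qed.

Section FiniteBranchingChain.
Variables (R : realType) (S : eqType) (I J : finType).
Variables (step : S -> I -> J -> S) (P : S -> I -> J -> R).
Hypothesis P_ge0 : forall x i j, 0 <= P x i j.
Hypothesis P_sum1 : forall x, \sum_i \sum_j P x i j = 1.

Definition step_mean (f : S -> R) (x : S) : R :=
  \sum_i \sum_j P x i j * f (step x i j).

Lemma step_mean_ge0 f x : (forall y, 0 <= f y) -> 0 <= step_mean f x.
Proof.
by move=> f0; apply: sumr_ge0 => i _; apply: sumr_ge0 => j _; apply: mulr_ge0.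
Qed.

Lemma ler_step_mean f g x :
  (forall i j, f (step x i j) <= g (step x i j)) -> step_mean f x <= step_mean g x.
Proof.
by move=> fg; apply: ler_sum => i _; apply: ler_sum => j _; apply: ler_wpM2l.
Qed.

Lemma step_mean_cst c x : step_mean (fun=> c) x = c.
Proof.
rewrite -[RHS]mul1r -(P_sum1 x) mulr_suml; apply: eq_bigr => i _.
by rewrite mulr_suml.
Qed.

Lemma step_meanD f g x :
  step_mean (fun y => f y + g y) x = step_mean f x + step_mean g x.
Proof.
rewrite -big_split; apply: eq_bigr => i _; rewrite -big_split.
by apply: eq_bigr => j _; rewrite mulrDr.
Qed.

Lemma step_meanZ c f x : step_mean (fun y => c * f y) x = c * step_mean f x.
Proof.
rewrite mulr_sumr; apply: eq_bigr => i _; rewrite mulr_sumr.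
by apply: eq_bigr => j _; rewrite mulrCA.
Qed.

Lemma step_meanB1 f x : step_mean (fun y => 1 - f y) x = 1 - step_mean f x.
Proof.
have := step_meanD (fun=> 1) (fun y => -1 * f y) x.
rewrite step_meanZ step_mean_cst mulN1r => <-.
by apply: eq_bigr => i _; apply: eq_bigr => j _; rewrite mulN1r.
Qed.

Lemma step_mean_sum n (F : 'I_n -> S -> R) x :
  step_mean (fun y => \sum_(k < n) F k y) x = \sum_(k < n) step_mean (F k) x.
Proof.
rewrite exchange_big; apply: eq_bigr => i _; rewrite exchange_big.
by apply: eq_bigr => j _; rewrite mulr_sumr.
Qed.

Lemma ler_step_mean_term {f x} i j :
  (forall y, 0 <= f y) -> P x i j * f (step x i j) <= step_mean f x.
Proof.
move=> f0; have t0 i' j' : 0 <= P x i' j' * f (step x i' j') by apply: mulr_ge0.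
rewrite /step_mean (bigD1 i) //= (bigD1 j) //= -addrA lerDl.
by apply: addr_ge0; apply: sumr_ge0 => * //; apply: sumr_ge0.
Qed.

Fixpoint transn (n : nat) (x y : S) : R :=
  if n is n'.+1 then step_mean (transn n' ^~ y) x else (x == y)%:R.

Lemma transn_ge0 n x y : 0 <= transn n x y.
Proof.
elim: n x => [|n IHn] x /=; first by case: (x == y).
exact: step_mean_ge0.
Qed.

Variable z : S.

(* [taboo n f x] is E_x[f(X_n); X_k <> z for all k < n]. *)
Fixpoint taboo (n : nat) (f : S -> R) (x : S) : R :=
  if n is n'.+1 then (if x == z then 0 else step_mean (taboo n' f) x) else f x.

Fixpoint first_hit (n : nat) (x : S) : R :=
  if n is n'.+1 then (if x == z then 0 else step_mean (first_hit n') x)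
  else (x == z)%:R.

Definition first_return (n : nat) : R :=
  if n is n'.+1 then step_mean (first_hit n') z else 0.

(* [hit_time_trunc M x] is E_x[min(T + 1, M)], T the hitting time of z. *)
Fixpoint hit_time_trunc (M : nat) (x : S) : R :=
  if M is M'.+1 then 1 + (if x == z then 0 else step_mean (hit_time_trunc M') x)
  else 0.

Lemma taboo_ge0 n f x : (forall y, 0 <= f y) -> 0 <= taboo n f x.
Proof.
move=> f0; elim: n x => [|n IHn] x //=.
by case: eqP => // _; apply: step_mean_ge0.
Qed.

Lemma ler_taboo n f g x : (forall y, f y <= g y) -> taboo n f x <= taboo n g x.
Proof.
move=> fg; elim: n x => [|n IHn] x //=.
by case: eqP => // _; apply: ler_step_mean.
Qed.

Lemma taboo_linear n f g c x :
  taboo n (fun y => f y + c * g y) x = taboo n f x + c * taboo n g x.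
Proof.
elim: n x => [|n IHn] x //=; case: eqP => _; first by rewrite mulr0 addr0.
by rewrite -step_meanZ -step_meanD; congr step_mean; apply/funext => y.
Qed.

Lemma taboo1_le1 n x : taboo n (fun=> 1) x <= 1.
Proof.
elim: n x => [|n IHn] x //=; case: eqP => // _.
by rewrite -[X in _ <= X](step_mean_cst 1 x); apply: ler_step_mean.
Qed.

Lemma taboo1_nonincr m n x : (m <= n)%N -> taboo n (fun=> 1) x <= taboo m (fun=> 1) x.
Proof.
elim: m n x => [|m IHm] n x lemn; first exact: taboo1_le1.
case: n lemn => // n lemn /=.
by case: eqP => // _; apply: ler_step_mean => i j; apply: IHm.
Qed.

Lemma first_hit_ge0 n x : 0 <= first_hit n x.
Proof.
elim: n x => [|n IHn] x /=; first by case: (x == z).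
by case: eqP => // _; apply: step_mean_ge0.
Qed.

Lemma sum_first_hit M x : \sum_(k < M) first_hit k x = 1 - taboo M (fun=> 1) x.
Proof.
elim: M x => [|M IHM] x; first by rewrite big_ord0 subrr.
rewrite big_ord_recl /=; case: eqP => _; first by rewrite big1 ?addr0 ?subr0.
by rewrite add0r -step_mean_sum -step_meanB1; congr step_mean; apply/funext => y.
Qed.

Lemma hit_time_trunc_le M x : hit_time_trunc M x <= M%:R.
Proof.
elim: M x => [|M IHM] x //=; rewrite -addn1 natrD addrC lerD2r.
case: eqP => // _; rewrite -[X in _ <= X](step_mean_cst M%:R x).
exact: ler_step_mean.
Qed.

Lemma hit_time_truncD L m x :
  hit_time_trunc (L + m) x = hit_time_trunc L x + taboo L (hit_time_trunc m) x.
Proof.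
elim: L x => [|L IHL] x /=; first by rewrite add0r.
case: eqP => _; first by rewrite !addr0.
by rewrite -addrA -step_meanD; congr (_ + step_mean _ _); apply/funext => y.
Qed.

Lemma hit_time_trunc_sum M x :
  hit_time_trunc M x = \sum_(N < M) taboo N (fun=> 1) x.
Proof.
elim: M x => [|M IHM] x /=; first by rewrite big_ord0.
rewrite big_ord_recl /=; congr (_ + _); case: eqP => _.
  by rewrite big1.
by rewrite -step_mean_sum; congr step_mean; apply/funext => y.
Qed.

Lemma first_hit_moment_le M x :
  \sum_(k < M) k.+1%:R * first_hit k x <= hit_time_trunc M x.
Proof.
elim: M x => [|M IHM] x; first by rewrite big_ord0.
rewrite big_ord_recl /=; case: eqP => _.
  by rewrite big1 ?addr0 ?mulr1 // => k _; rewrite mulr0.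
rewrite mulr0 add0r.
under eq_bigr => k _ do rewrite -step_meanZ.
rewrite -step_mean_sum -[X in X + _](step_mean_cst 1 x) -step_meanD.
apply: ler_step_mean => i j; rewrite addrC.
under eq_bigr => k _ do rewrite -addn1 natrD mulrDl mul1r.
rewrite big_split /= sum_first_hit; apply: lerD; first exact: IHM.
by rewrite lerBlDr lerDl taboo_ge0.
Qed.

Section BoundedHitTime.
Variable B : S -> R.
Hypothesis hit_time_trunc_leB : forall M x, hit_time_trunc M x <= B x.

Lemma taboo1_le_harmonic M x : taboo M (fun=> 1) x <= B x / M.+1%:R.
Proof.
rewrite ler_pdivlMr // mulrC; apply: le_trans (hit_time_trunc_leB M.+1 x).
have -> : M.+1%:R * taboo M (fun=> 1) x = \sum_(N < M.+1) taboo M (fun=> 1) x.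
  by rewrite sumr_const card_ord mulr_natl.
rewrite hit_time_trunc_sum; apply: ler_sum => N _; apply: taboo1_nonincr.
by rewrite -ltnS.
Qed.

Lemma cvg_series_first_return : series first_return @ \oo --> (1 : R).
Proof.
rewrite -cvg_shiftS.
pose w n := step_mean (taboo n (fun=> 1)) z.
have -> : [sequence series first_return n.+1]_n = (fun n => 1 - w n).
  apply/funext => n /=; rewrite /series /= big_mkord big_ord_recl /= add0r.
  rewrite -step_mean_sum -step_meanB1; congr step_mean; apply/funext => y.
  by rewrite -sum_first_hit.
pose K := step_mean B z.
have w_le n : 0 <= w n <= K * n.+1%:R^-1.
  apply/andP; split; first by apply: step_mean_ge0 => y; apply: taboo_ge0.
  rewrite mulrC -step_meanZ; apply: ler_step_mean => i j.
  by rewrite mulrC taboo1_le_harmonic.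
have w0 : w @ \oo --> 0.
  apply: (squeeze_cvgr _ (cvg_cst 0)); first by apply: nearW => n; exact: w_le.
  by have := cvgMr (a := K) (@cvg_harmonic R); rewrite mulr0; apply.
by have := cvgB (cvg_cst (1 : R)) w0; rewrite subr0; apply.
Qed.

Lemma is_cvg_series_mean_return : cvg (series (fun n => n%:R * first_return n) @ \oo).
Proof.
have B0 x : 0 <= B x by apply: le_trans (hit_time_trunc_leB 0 x).
apply: nondecreasing_is_cvgn.
  apply: nondecreasing_series => -[|n] _ _; first by rewrite mul0r.
  by apply: mulr_ge0 => //; apply: step_mean_ge0 => y; apply: first_hit_ge0.
exists (step_mean B z) => _ [[|M] _ <-]; first by rewrite /series /= big_geq // step_mean_ge0.
rewrite /series /= big_mkord big_ord_recl /= mul0r add0r.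
under eq_bigr => k _ do rewrite /bump /= add1n -step_meanZ.
rewrite -step_mean_sum; apply: ler_step_mean => i j.
exact: le_trans (first_hit_moment_le _ _) (hit_time_trunc_leB _ _).
Qed.

End BoundedHitTime.

Section Paths.
Variables (dist : S -> S -> nat) (c : R).
Hypothesis dist_eq0 : forall x y, (dist x y == 0%N) = (x == y).
Hypothesis dist_step :
  forall {x y}, x != y -> exists i j, dist (step x i j) y = (dist x y).-1.
Hypothesis c_ge0 : 0 <= c.
Hypothesis c_le_P : forall x i j, c <= P x i j.

Lemma dist_neq {x y k} : dist x y = k.+1 -> x != y.
Proof. by move=> dxy; rewrite -dist_eq0 dxy. Qed.

Lemma transn_ge_dist x y : c ^+ dist x y <= transn (dist x y) x y.
Proof.
have [k dxy] : exists k, dist x y = k by eexists.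
rewrite dxy; elim: k x dxy => [|k IHk] x dxy.
  by move/eqP: dxy; rewrite dist_eq0 => /eqP ->; rewrite /= eqxx.
have [i [j dstep]] := dist_step (dist_neq dxy); rewrite dxy /= in dstep.
rewrite exprS; apply: le_trans (ler_step_mean_term i j (transn_ge0 k ^~ y)).
by apply: ler_pM => //; [exact: exprn_ge0 | exact: IHk].
Qed.

Lemma taboo1_le_dist n x : (dist x z < n)%N -> taboo n (fun=> 1) x <= 1 - c ^+ dist x z.
Proof.
have [k dxz] : exists k, dist x z = k by eexists.
rewrite dxz; elim: k n x dxz => [|k IHk] [|n] x dxz //= ltkn.
  by move/eqP: dxz; rewrite dist_eq0 => /eqP ->; rewrite eqxx expr0 subrr.
rewrite (negbTE (dist_neq dxz)) lerBrDl -lerBrDr -step_meanB1.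
have [i [j dstep]] := dist_step (dist_neq dxz); rewrite dxz /= in dstep.
have hit_ge y : 0 <= 1 - taboo n (fun=> 1) y by rewrite subr_ge0 taboo1_le1.
rewrite exprS; apply: le_trans (ler_step_mean_term i j hit_ge).
apply: ler_pM => //; first exact: exprn_ge0.
by rewrite lerBrDl -lerBrDr IHk.
Qed.

End Paths.

Section Foster.
Variables (size : S -> nat) (V : S -> R) (r L : nat) (delta : R).
Hypothesis size_step : forall x i j, (size (step x i j) <= (size x).+1)%N.
Hypothesis V_ge0 : forall x, 0 <= V x.
Hypothesis V_le_size : forall x, V x <= (size x)%:R ^+ 2.
Hypothesis V_drift : forall x, (r <= size x)%N -> step_mean V x <= V x - 1.
Hypothesis delta_gt0 : 0 < delta.
Hypothesis taboo1_small : forall {x}, (size x < r)%N -> taboo L (fun=> 1) x <= 1 - delta.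

Lemma taboo_le_local n f x b : 0 <= b ->
  (forall y, (size y <= size x + n)%N -> f y <= b) -> taboo n f x <= b.
Proof.
elim: n f x => [|n IHn] f x b0 fb /=; first by apply: fb; rewrite addn0.
case: eqP => // _; rewrite -[X in _ <= X](step_mean_cst b x).
apply: ler_step_mean => i j; apply: IHn => // y le_y; apply: fb.
by apply: leq_trans le_y _; rewrite addnS -addSn leq_add2r size_step.
Qed.

(* Strong induction on [M]: away from the small states the drift of [V] pays
   for each step; from a small state the next [L] steps cost at most [L + C],
   after which [z] has been visited with probability at least [delta]. *)
Lemma hit_time_trunc_le_lyapunov : exists A, forall M x, hit_time_trunc M x <= V x + A.
Proof.
pose C : R := (r + L)%:R ^+ 2.
have C_ge0 : 0 <= C by apply: sqr_ge0.
have [A A_ge A_delta] := excursion_constant (ler0n R L) C_ge0 delta_gt0.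
have A_ge1 : 1 <= A by have : (0 : R) <= L%:R by []; lra.
exists A => M; elim/ltn_ind: M => -[|M] IHM x; have VA := V_ge0 x.
  by rewrite /=; lra.
case: (eqVneq x z) => [->|xz]; first by rewrite /= eqxx addr0; have := V_ge0 z; lra.
have [r_le|lt_r] := leqP r (size x).
  rewrite /= (negbTE xz); have := V_drift r_le.
  have : step_mean (hit_time_trunc M) x <= step_mean (fun y => V y + A) x.
    by apply: ler_step_mean => i j; exact: IHM.
  rewrite step_meanD step_mean_cst; lra.
have [le_ML|lt_LM] := leqP M.+1 L.
  have := hit_time_trunc_le M.+1 x.
  have : (M.+1%:R : R) <= L%:R by rewrite ler_nat.
  lra.
have L_gt0 : (0 < L)%N.
  case: (posnP L) => // L0; have := taboo1_small lt_r; rewrite L0 /= => h.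
  have : delta <= 0 by lra.
  by rewrite leNgt delta_gt0.
have -> : M.+1 = (L + (M.+1 - L))%N by rewrite subnKC // ltnW.
rewrite hit_time_truncD.
have excursion : taboo L (hit_time_trunc (M.+1 - L)) x <= taboo L V x + A * taboo L (fun=> 1) x.
  rewrite -taboo_linear; apply: ler_taboo => y; rewrite mulr1; apply: IHM; lia.
have V_local : taboo L V x <= C.
  apply: taboo_le_local => // y le_y; apply: le_trans (V_le_size y) _.
  by rewrite lerXn2r ?nnegrE // ler_nat (leq_trans le_y) // leq_add2r ltnW.
have A_taboo : A * taboo L (fun=> 1) x <= A * (1 - delta).
  by apply: ler_wpM2l; [lra | exact: taboo1_small].
have := hit_time_trunc_le L x; lra.
Qed.

End Foster.

End FiniteBranchingChain.

Local Notation next := Defs.next.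
Local Notation i0 := (@ord0 1).
Local Notation i1 := (@ord_max 1).

Lemma ord2P (k : 'I_2) : k = i0 \/ k = i1.
Proof. by case: k => -[|[|k]] lt_k; [left | right |]; try apply: val_inj. Qed.

Lemma stratumP (s : stratum) :
  [\/ s = (i0, i0), s = (i0, i1), s = (i1, i0) | s = (i1, i1)].
Proof.
by case: s => k l; case: (ord2P k) => ->; case: (ord2P l) => ->;
  [apply: Or41 | apply: Or42 | apply: Or43 | apply: Or44].
Qed.

Lemma sum_stratum (V : nmodType) (F : stratum -> V) :
  \sum_t F t = F (i0, i0) + F (i0, i1) + F (i1, i0) + F (i1, i1).
Proof.
have -> : \sum_t F t = \sum_(i < 2) \sum_(j < 2) F (i, j).
  by rewrite pair_bigA; apply: eq_bigr => -[].
rewrite !big_ord_recl !big_ord0 /= !addr0 addrA.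
by have -> : lift ord0 ord0 = i1 :> 'I_2 by apply: val_inj.
Qed.

Definition sgn (b : bool) : int := if b then 1 else -1.

Lemma next_cell (d : state) s b t : next d s b t = d t + (if t == s then sgn b else 0).
Proof. by rewrite ffunE. Qed.

Definition l1norm (d : state) : nat := \sum_t `|d t|.
Definition l1dist (x y : state) : nat := \sum_t `|x t - y t|.

Lemma l1norm_next d s b : (l1norm (next d s b) <= (l1norm d).+1)%N.
Proof.
rewrite /l1norm (bigD1 s) //= [in leqRHS](bigD1 s) //= next_cell eqxx -addSn.
rewrite leq_add //; first by rewrite /sgn; case: b; lia.
by apply: leq_sum => t /negbTE ts; rewrite next_cell ts addr0.
Qed.

Lemma l1dist_le_norm x y : (l1dist x y <= l1norm x + l1norm y)%N.
Proof. by rewrite /l1dist /l1norm -big_split; apply: leq_sum => t _ /=; lia. Qed.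

Lemma l1dist_eq0 x y : (l1dist x y == 0%N) = (x == y).
Proof.
rewrite /l1dist sum_nat_eq0; apply/forallP/eqP => [xy|-> t]; last by rewrite subrr.
by apply/ffunP => t; move/implyP: (xy t) => /(_ isT); rewrite absz_eq0 subr_eq0 => /eqP.
Qed.

Lemma l1dist_step x y : x != y ->
  exists s b, l1dist (next x s b) y = (l1dist x y).-1.
Proof.
move=> /eqP xy; have [s xys] : exists s, x s != y s.
  by apply/existsP; apply: contra_notT xy => /existsPn xy; apply/ffunP => t; apply/eqP/negPn.
exists s, (x s < y s); rewrite /l1dist (bigD1 s) //= [in RHS](bigD1 s) //= next_cell eqxx.
rewrite (eq_bigr (fun t => absz (x t - y t))); last by move=> t /negbTE ts; rewrite next_cell ts addr0.
move: xys; rewrite /sgn; move: (x s) (y s) (\sum_(i | i != s) _)%N => a c S.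
by case: ltP => /= h hs; lia.
Qed.

Lemma Dall_next d s b : Dall (next d s b) = Dall d + sgn b.
Proof.
rewrite /Dall (bigD1 s) //= [in RHS](bigD1 s) //= next_cell eqxx.
rewrite (eq_bigr d); last by move=> t /negbTE ts; rewrite next_cell ts addr0.
by rewrite addrAC.
Qed.

Lemma DallE d : Dall d = d (i0, i0) + d (i0, i1) + d (i1, i0) + d (i1, i1).
Proof. exact: sum_stratum. Qed.

Lemma Dm1E d k : Dm1 d k =
  if k == i0 then d (i0, i0) + d (i0, i1) else d (i1, i0) + d (i1, i1).
Proof.
by rewrite /Dm1 big_mkcond sum_stratum /=; case: (ord2P k) => ->; rewrite /= ?add0r ?addr0.
Qed.

Lemma Dm2E d k : Dm2 d k =
  if k == i0 then d (i0, i0) + d (i1, i0) else d (i0, i1) + d (i1, i1).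
Proof.
by rewrite /Dm2 big_mkcond sum_stratum /=; case: (ord2P k) => ->; rewrite /= ?add0r ?addr0.
Qed.

Lemma ler_sum_mul_norm (R : realDomainType) (T : finType) (a b : T -> R) :
  \sum_t a t * b t <= (\sum_t `|a t|) * \sum_t `|b t|.
Proof.
rewrite mulr_suml; apply: ler_sum => t _; apply: le_trans (ler_norm _) _.
rewrite normrM ler_wpM2l // (bigD1 t) //= lerDl.
by apply: sumr_ge0.
Qed.

Lemma sqr_le_of_norm (R : realDomainType) (x y : R) : `|x| <= y -> x ^+ 2 <= y ^+ 2.
Proof.
move=> xy; rewrite -real_normK ?num_real // lerXn2r ?nnegrE //.
exact: le_trans (normr_ge0 x) xy.
Qed.

Lemma sum_sqr_le_sqr_sum_norm (R : realDomainType) (T : finType) (a : T -> R) :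
  \sum_t a t ^+ 2 <= (\sum_t `|a t|) ^+ 2.
Proof.
rewrite [leRHS]expr2 mulr_suml; apply: ler_sum => t _.
rewrite -real_normK ?num_real // expr2 ler_wpM2l // (bigD1 t) //= lerDl.
exact: sumr_ge0.
Qed.

Lemma sqrD_le_sqr_normD (R : realDomainType) (x y : R) :
  x ^+ 2 + y ^+ 2 <= (`|x| + `|y|) ^+ 2.
Proof.
rewrite -(real_normK (num_real x)) -(real_normK (num_real y)).
by have := normr_ge0 x; have := normr_ge0 y; nra.
Qed.

Lemma l1normE (R : realDomainType) (d : state) :
  (l1norm d)%:R = \sum_t `|(d t)%:~R : R|.
Proof. by rewrite /l1norm natr_sum; apply: eq_bigr => t _; rewrite natr_absz intr_norm. Qed.

Section Lyapunov.
Variables (R : realType) (wo wm1 wm2 ws : R).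
Hypotheses (wo_ge0 : 0 <= wo) (wm1_ge0 : 0 <= wm1) (wm2_ge0 : 0 <= wm2) (ws_ge0 : 0 <= ws).
Hypothesis w_sum1 : wo + wm1 + wm2 + ws = 1.

Definition lyap (d : state) : R :=
  wo * (Dall d)%:~R ^+ 2
  + wm1 * ((Dm1 d i0)%:~R ^+ 2 + (Dm1 d i1)%:~R ^+ 2)
  + wm2 * ((Dm2 d i0)%:~R ^+ 2 + (Dm2 d i1)%:~R ^+ 2)
  + ws * \sum_t (d t)%:~R ^+ 2.

Definition gap (d : state) (s : stratum) : R :=
  wo * (Dall d)%:~R + wm1 * (Dm1 d s.1)%:~R + wm2 * (Dm2 d s.2)%:~R + ws * (d s)%:~R.

Lemma imb_gap d s : imb wo wm1 wm2 ws d s 1 - imb wo wm1 wm2 ws d s (-1) = 4 * gap d s.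
Proof. by rewrite /imb /gap !rmorphD /= !rmorphN /= !rmorph1; ring. Qed.

Lemma lyap_next d s b : lyap (next d s b) = lyap d + 2 * (sgn b)%:~R * gap d s + 1.
Proof.
rewrite /lyap /gap !sum_stratum.
have -> : ws = 1 - wo - wm1 - wm2 by move: w_sum1; lra.
by case: (stratumP s) => ->; rewrite !DallE !Dm1E !Dm2E /= !next_cell /=;
  case: b; rewrite /sgn /= ?addr0 !rmorphD /=; ring.
Qed.

Lemma lyap_sum_gap d : lyap d = \sum_t (d t)%:~R * gap d t.
Proof.
by rewrite /lyap /gap !sum_stratum DallE !Dm1E !Dm2E /= !rmorphD /=; ring.
Qed.

Lemma lyap_ge0 d : 0 <= lyap d.
Proof.
rewrite /lyap; apply: addr_ge0; [apply: addr_ge0; [apply: addr_ge0|]|];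
  apply: mulr_ge0; rewrite // ?addr_ge0 ?sqr_ge0 //.
by apply: sumr_ge0 => t _; apply: sqr_ge0.
Qed.

Lemma lyap_le_sqr_l1norm d : lyap d <= (l1norm d)%:R ^+ 2.
Proof.
set N := (l1norm d)%:R.
have Dall_le : (Dall d)%:~R ^+ 2 <= N ^+ 2.
  apply: sqr_le_of_norm; rewrite /N l1normE /Dall rmorph_sum.
  exact: ler_norm_sum.
have marginal_le (x y : int) :
    `|x%:~R| + `|y%:~R| <= N -> (x%:~R : R) ^+ 2 + y%:~R ^+ 2 <= N ^+ 2.
  move=> xyN; apply: le_trans (sqrD_le_sqr_normD _ _) _.
  by apply: sqr_le_of_norm; rewrite ger0_norm ?addr_ge0.
have l1normE4 := l1normE R d; rewrite sum_stratum in l1normE4.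
have tri (x y : int) : `|(x + y)%:~R : R| <= `|x%:~R| + `|y%:~R| by rewrite rmorphD ler_normD.
have Dm1_le : (Dm1 d i0)%:~R ^+ 2 + (Dm1 d i1)%:~R ^+ 2 <= N ^+ 2.
  apply: marginal_le; rewrite !Dm1E /= /N l1normE4.
  by have := tri (d (i0, i0)) (d (i0, i1)); have := tri (d (i1, i0)) (d (i1, i1)); lra.
have Dm2_le : (Dm2 d i0)%:~R ^+ 2 + (Dm2 d i1)%:~R ^+ 2 <= N ^+ 2.
  apply: marginal_le; rewrite !Dm2E /= /N l1normE4.
  by have := tri (d (i0, i0)) (d (i1, i0)); have := tri (d (i0, i1)) (d (i1, i1)); lra.
have cell_le : \sum_t (d t)%:~R ^+ 2 <= N ^+ 2.
  by rewrite /N l1normE; apply: sum_sqr_le_sqr_sum_norm.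
rewrite -[leRHS]mul1r -w_sum1 /lyap !mulrDl.
by do ![apply: lerD]; apply: ler_wpM2l.
Qed.

Lemma sqr_l1norm_le d : (l1norm d)%:R ^+ 2 <= 4 * \sum_t ((d t)%:~R : R) ^+ 2.
Proof.
rewrite l1normE !sum_stratum -!(real_normK (num_real ((d _)%:~R : R))).
move: `|_| `|_| `|_| `|_| => a b c e.
have := sqr_ge0 (a - b); have := sqr_ge0 (a - c); have := sqr_ge0 (a - e).
have := sqr_ge0 (b - c); have := sqr_ge0 (b - e); have := sqr_ge0 (c - e).
nra.
Qed.

Lemma ws_l1norm_le_sum_gap d : ws * (l1norm d)%:R <= 4 * \sum_t `|gap d t|.
Proof.
set N : R := (l1norm d)%:R; set G := \sum_t `|gap d t|.
have G_ge0 : 0 <= G by apply: sumr_ge0.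
have cells_le : ws * \sum_t ((d t)%:~R : R) ^+ 2 <= N * G.
  rewrite /N l1normE; apply: le_trans _ (ler_sum_mul_norm (fun t => (d t)%:~R) (gap d)).
  rewrite -lyap_sum_gap /lyap lerDr.
  by apply: addr_ge0; [apply: addr_ge0|]; apply: mulr_ge0; rewrite // ?addr_ge0 ?sqr_ge0.
have sqr_le : ws * N ^+ 2 <= 4 * (N * G).
  apply: le_trans (ler_wpM2l ws_ge0 (sqr_l1norm_le d)) _.
  by rewrite mulrCA ler_wpM2l.
have [N0|N_gt0] := eqVneq N 0; first by rewrite N0 mulr0 mulr_ge0.
have N_pos : 0 < N by rewrite lt0r N_gt0 /=.
by rewrite -(ler_pM2r N_pos); move: sqr_le; rewrite expr2; lra.
Qed.

Variables (p q : R) (pi : stratum -> R).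
Hypotheses (q_gt0 : 0 < q) (q_lt_p : q < p) (pq1 : p + q = 1).
Hypotheses (pi_gt0 : forall s, 0 < pi s) (pi_sum1 : \sum_s pi s = 1).

Local Notation P := (pstep wo wm1 wm2 ws p q pi).
Local Notation prob1 := (prob1 wo wm1 wm2 ws p q).

Lemma prob1_bounds d s : q <= prob1 d s <= p.
Proof. by rewrite /prob1; case: ltP => _; [|case: ltP => _]; move: q_lt_p pq1; lra. Qed.

Lemma prob1_gap d s : (2 * prob1 d s - 1) * gap d s = - ((p - q) * `|gap d s|).
Proof.
have := imb_gap d s; rewrite /prob1; case: ltP => [imb_lt|imb_ge] gapE.
  have gap_gt0 : 0 < gap d s by move: imb_lt; lra.
  have -> : 2 * q - 1 = - (p - q) by move: pq1; lra.
  by rewrite gtr0_norm // mulNr.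
case: ltP => [imb_gt|imb_le].
  have gap_lt0 : gap d s < 0 by move: imb_gt; lra.
  have -> : 2 * p - 1 = p - q by move: pq1; lra.
  by rewrite ltr0_norm // mulrN opprK.
have -> : gap d s = 0 by move: imb_ge imb_le; lra.
by rewrite normr0 !mulr0 oppr0.
Qed.

Lemma pstep_ge0 d s b : 0 <= P d s b.
Proof.
have /andP[q_le le_p] := prob1_bounds d s.
by apply: mulr_ge0; [exact: ltW | case: b; move: pq1 q_gt0; lra].
Qed.

Lemma pstep_sum1 d : \sum_s \sum_b P d s b = 1.
Proof. by rewrite -pi_sum1; apply: eq_bigr => s _; rewrite big_bool /pstep /=; ring. Qed.

Lemma pstep_ge c d s b : (forall s, c <= pi s) -> 0 <= c -> c * q <= P d s b.
Proof.
move=> c_le c_ge0; have /andP[q_le le_p] := prob1_bounds d s.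
by apply: ler_pM; [done | exact: ltW | exact: c_le | case: b; move: pq1 q_gt0; lra].
Qed.

Lemma lyap_mean_stratum d s :
  \sum_b P d s b * lyap (next d s b) = pi s * (lyap d + 1 - 2 * (p - q) * `|gap d s|).
Proof.
have -> : 2 * (p - q) * `|gap d s| = - (2 * ((2 * prob1 d s - 1) * gap d s)).
  by rewrite prob1_gap; ring.
by rewrite big_bool /pstep !lyap_next /sgn /= rmorphN rmorph1; ring.
Qed.

Lemma lyap_drift c r d : (forall s, c <= pi s) -> 0 <= c ->
  4 <= (p - q) * c * ws * r%:R -> (r <= l1norm d)%N ->
  step_mean next P lyap d <= lyap d - 1.
Proof.
move=> c_le c_ge0 r_large r_le.
set G := \sum_s pi s * `|gap d s|.
have meanE : step_mean next P lyap d = lyap d + 1 - 2 * (p - q) * G.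
  rewrite /step_mean (eq_bigr _ (fun s _ => lyap_mean_stratum d s)) /G.
  under eq_bigr => s _ do rewrite mulrBr -mulrCA.
  by rewrite sumrB -mulr_suml pi_sum1 mul1r -mulr_sumr.
have pq_ge0 : 0 <= p - q by move: q_lt_p; lra.
have cG_ge0 : 0 <= (p - q) * c by rewrite mulr_ge0.
have G_ge : 4 * ((p - q) * c * \sum_s `|gap d s|) <= 4 * ((p - q) * G).
  rewrite ler_pM2l // -mulrA ler_wpM2l // mulr_sumr /G.
  by apply: ler_sum => s _; rewrite ler_wpM2r.
have gap_ge : (p - q) * c * (ws * (l1norm d)%:R) <= (p - q) * c * (4 * \sum_s `|gap d s|).
  by rewrite ler_wpM2l // ws_l1norm_le_sum_gap.
have r_ge : (p - q) * c * ws * r%:R <= (p - q) * c * (ws * (l1norm d)%:R).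
  by rewrite -mulrA ler_wpM2l // ler_wpM2l // ler_nat.
rewrite meanE; move: r_large G_ge gap_ge r_ge; rewrite !mulrA; lra.
Qed.

End Lyapunov.

Lemma transn_gt0_parity (R : realType) (P : state -> stratum -> bool -> R) :
  (forall d s b, 0 <= P d s b) ->
  forall n x y, 0 < transn next P n x y -> exists k, Dall x - Dall y + n%:Z = 2 * k.
Proof.
move=> P_ge0; elim=> [|n IHn] x y /=.
  by case: eqP => [-> _|]; [exists 0; rewrite subrr | rewrite ltxx].
case: (boolP [exists s, exists b, 0 < transn next P n (next x s b) y]).
  case/existsP=> s /existsP[b /IHn[k]]; rewrite Dall_next /sgn.
  by case: b => /= kE; [exists k | exists (k + 1)]; lia.
move=> /existsPn none; rewrite /step_mean big1 ?ltxx // => s _.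
rewrite big1 // => b _; move/existsPn/(_ b): (none s); rewrite -leNgt => le0.
suff -> : transn next P n (next x s b) y = 0 by rewrite mulr0.
by apply/eqP; rewrite eq_le le0 transn_ge0.
Qed.

Lemma transn_gt0_return_even (R : realType) (P : state -> stratum -> bool -> R) :
  (forall d s b, 0 <= P d s b) ->
  forall n x, 0 < transn next P n x x -> (2 %| n)%N.
Proof. by move=> P_ge0 n x /(transn_gt0_parity P_ge0)[k]; rewrite subrr add0r; lia. Qed.

Section ChainIdentification.
Variables (R : realType) (wo wm1 wm2 ws p q : R) (pi : stratum -> R).
Local Notation P := (pstep wo wm1 wm2 ws p q pi).

Lemma nstepE n x y : nstep wo wm1 wm2 ws p q pi n x y = transn next P n x y.
Proof.
by elim: n x => [|n IHn] x //=; rewrite IHn.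
Qed.

Lemma hitE z n d : hit wo wm1 wm2 ws p q pi z n d = first_hit next P z n d.
Proof.
elim: n d => [|n IHn] d //=; case: (d == z) => //.
by apply: eq_bigr => s _; apply: eq_bigr => b _; rewrite IHn.
Qed.

Lemma firstretE z : firstret wo wm1 wm2 ws p q pi z = first_return next P z.
Proof.
apply/funext => -[|n] //=.
by apply: eq_bigr => s _; apply: eq_bigr => b _; rewrite hitE.
Qed.

End ChainIdentification.

Lemma lt_CboundE (R : realType) (b m : R) : 0 <= b -> 0 <= m ->
  m < Cbound b <-> 4 * (b + m) ^+ 2 + 2 * (b + m) * (1 - b) - (1 + b) ^+ 2 < 0.
Proof.
move=> b_ge0 m_ge0; rewrite /Cbound.
set S := (1 - b) ^+ 2 + 4 * (1 + b) ^+ 2.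
have S_gt0 : 0 < S by rewrite /S; nra.
have lhs_ge0 : 0 <= 4 * m + 1 + 3 * b by lra.
have -> : (m < (Num.sqrt S - 1 - 3 * b) / 4) = (4 * m + 1 + 3 * b < Num.sqrt S).
  by apply/idP/idP; lra.
rewrite -(ger0_norm lhs_ge0) -sqrtr_sqr ltr_sqrt //.
by split; rewrite /S; nra.
Qed.

Section Solution.
Variables (R : realType) (a b x1 x2 x3 : R).
Hypotheses (b_ge0 : 0 <= b) (b_le_a : b <= a) (a_le : 2 * a <= 1 + b).
Hypothesis eq1 : x1 + a * x2 + a * x3 = b.
Hypothesis eq2 : a * x1 + x2 + b * x3 = a.
Hypothesis eq3 : a * x1 + b * x2 + x3 = a.

Lemma solution_sym : b < 1 -> x2 = x3.
Proof.
move=> b_lt1; have : (1 - b) * (x2 - x3) = 0 by move: eq2 eq3; lra.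
by move/eqP; rewrite mulf_eq0 subr_eq0 => /orP[/eqP|/eqP //]; lra.
Qed.

Lemma norm_solution_lt1 :
  `|x1| + `|x2| + `|x3| < 1 <-> 4 * a ^+ 2 + 2 * a * (1 - b) - (1 + b) ^+ 2 < 0.
Proof.
have [b1|b_lt1] := eqVneq b 1.
  have a1 : a = 1 by move: b_le_a a_le; rewrite b1; lra.
  rewrite a1 b1; split; last by lra.
  have := ler_norm x1; have := ler_norm x2; have := ler_norm x3.
  by move: eq1; rewrite a1 b1; lra.
have {b_lt1}b_lt1 : b < 1 by rewrite lt_neqAle b_lt1 /=; move: a_le b_le_a; lra.
have x23 := solution_sym b_lt1; subst x3.
pose D := 1 + b - 2 * a ^+ 2.
have D_gt0 : 0 < D by rewrite /D; move: a_le b_le_a b_ge0 b_lt1; nra.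
have x2E : x2 * D = a * (1 - b).
  by have := congr1 ( *%R a) eq1; move: eq2; rewrite /D; lra.
have x1E : x1 * D = b + b ^+ 2 - 2 * a ^+ 2.
  have := congr1 ( *%R (1 + b)) eq1; have := congr1 ( *%R (2 * a)) eq2.
  by rewrite /D; lra.
have x2_ge0 : 0 <= x2.
  by rewrite -(pmulr_lge0 _ D_gt0) x2E mulr_ge0 //; move: b_ge0 b_le_a b_lt1; lra.
have lt1E (y : R) : (y < 1) = (y * D < D) by rewrite -{2}(mul1r D) ltr_pM2r.
rewrite (ger0_norm x2_ge0).
have plusE : x1 + x2 + x2 < 1 <-> 2 * a < 1 + b.
  rewrite lt1E !mulrDl x1E x2E /D; split; nra.
have minusE : - x1 + x2 + x2 < 1 <-> 4 * a ^+ 2 + 2 * a * (1 - b) - (1 + b) ^+ 2 < 0.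
  rewrite lt1E !mulrDl mulNr x1E x2E /D; split; lra.
have [x1_ge0|x1_lt0] := lerP 0 x1.
  rewrite (ger0_norm x1_ge0) plusE; split => [a_lt|Q_lt]; last first.
    by move: Q_lt b_ge0 b_le_a; nra.
  apply/minusE; move: x1_ge0 x2_ge0 a_lt; lra.
by rewrite (ltr0_norm x1_lt0) minusE.
Qed.

End Solution.

Lemma pos_lower_bound (R : realDomainType) (T : finType) (f : T -> R) :
  (forall t, 0 < f t) -> exists2 c, 0 < c & forall t, c <= f t.
Proof.
move=> f_gt0; exists (\big[Num.min/1]_t f t).
  by apply: (big_ind (fun x => 0 < x)) => // x y; rewrite lt_min => -> ->.
by move=> t; rewrite (bigD1 t) //= ge_min lexx.
Qed.

Lemma l1dist_next_self z s : l1dist (next z s true) z = 1%N.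
Proof.
rewrite /l1dist (bigD1 s) //= next_cell eqxx /sgn addrAC subrr add0r big1 //.
by move=> t /negbTE ts; rewrite next_cell ts addr0 subrr.
Qed.

Section DesignChain.
Variables (R : realType) (wo wm1 wm2 ws p q : R) (pi : stratum -> R).
Hypotheses (wo_ge0 : 0 <= wo) (wm1_ge0 : 0 <= wm1) (wm2_ge0 : 0 <= wm2) (ws_gt0 : 0 < ws).
Hypothesis w_sum1 : wo + wm1 + wm2 + ws = 1.
Hypotheses (q_gt0 : 0 < q) (q_lt_p : q < p) (pq1 : p + q = 1).
Hypotheses (pi_gt0 : forall s, 0 < pi s) (pi_sum1 : \sum_s pi s = 1).
Variable c : R.
Hypotheses (c_gt0 : 0 < c) (c_le_pi : forall s, c <= pi s).

Local Notation P := (pstep wo wm1 wm2 ws p q pi).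

Let P_ge0 := pstep_ge0 wo wm1 wm2 ws q_gt0 q_lt_p pq1 pi_gt0.
Let P_sum1 := pstep_sum1 wo wm1 wm2 ws p q pi_sum1.
Let cq_gt0 : 0 < c * q := mulr_gt0 c_gt0 q_gt0.
Let cq_le_P d s b : c * q <= P d s b := pstep_ge wo wm1 wm2 ws q_gt0 q_lt_p pq1 d s b c_le_pi (ltW c_gt0).

Lemma transn_ge_l1dist x y : (c * q) ^+ l1dist x y <= transn next P (l1dist x y) x y.
Proof. exact: transn_ge_dist l1dist_eq0 l1dist_step (ltW cq_gt0) cq_le_P x y. Qed.

Lemma design_irreducible : irreducible wo wm1 wm2 ws p q pi.
Proof.
move=> x y; exists (l1dist x y); rewrite nstepE.
exact: lt_le_trans (exprn_gt0 _ cq_gt0) (transn_ge_l1dist x y).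
Qed.

Lemma design_period2 z : period_is wo wm1 wm2 ws p q pi 2 z.
Proof.
split=> [n n_gt0|k k_div].
  by rewrite nstepE; apply: transn_gt0_return_even.
apply: k_div => //; rewrite nstepE.
have to_z := transn_ge_l1dist (next z (i0, i0) true) z.
rewrite l1dist_next_self in to_z.
apply: lt_le_trans _ (ler_step_mean_term next P_ge0 (i0, i0) true (transn_ge0 next P_ge0 1 ^~ z)).
by rewrite mulr_gt0 ?(lt_le_trans cq_gt0) ?(lt_le_trans (exprn_gt0 1 cq_gt0)).
Qed.

Lemma design_pos_recurrent z : pos_recurrent wo wm1 wm2 ws p q pi z.
Proof.
have [r r_large] : exists r, 4 <= (p - q) * c * ws * r%:R.
  have K_gt0 : 0 < (p - q) * c * ws by rewrite !mulr_gt0 ?subr_gt0.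
  exists (Num.truncn (((p - q) * c * ws)^-1 * 4)).+1.
  by rewrite -ler_pdivrMl // ltW // truncnS_gt.
have cq_le1 : c * q <= 1.
  have pi_le1 : pi (i0, i0) <= 1.
    by rewrite -pi_sum1 (bigD1 (i0, i0)) //= lerDl sumr_ge0 // => s _; apply: ltW.
  rewrite -[leRHS]mulr1; apply: ler_pM; rewrite ?(ltW c_gt0) ?(ltW q_gt0) //.
    exact: le_trans (c_le_pi _) pi_le1.
  by move: pq1 q_lt_p; lra.
pose L := (r + l1norm z)%N.
have small x : (l1norm x < r)%N -> taboo next P z L (fun=> 1) x <= 1 - (c * q) ^+ L.
  move=> x_small; have dist_lt : (l1dist x z < L)%N.
    by apply: leq_ltn_trans (l1dist_le_norm x z) _; rewrite ltn_add2r.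
  apply: le_trans (taboo1_le_dist P_ge0 P_sum1 l1dist_eq0 l1dist_step (ltW cq_gt0) cq_le_P dist_lt) _.
  by rewrite lerD2l lerN2; apply: ler_wiXn2l; rewrite ?(ltW cq_gt0) // ltnW.
have drift x : (r <= l1norm x)%N -> step_mean next P (lyap wo wm1 wm2 ws) x <= lyap wo wm1 wm2 ws x - 1.
  by move=> r_le; have := lyap_drift wo_ge0 wm1_ge0 wm2_ge0 (ltW ws_gt0) w_sum1 q_lt_p pq1
    pi_sum1 c_le_pi (ltW c_gt0) r_large r_le; apply.
have [A bound] := hit_time_trunc_le_lyapunov P_ge0 P_sum1 l1norm_next
  (lyap_ge0 wo_ge0 wm1_ge0 wm2_ge0 (ltW ws_gt0))
  (lyap_le_sqr_l1norm wo_ge0 wm1_ge0 wm2_ge0 (ltW ws_gt0) w_sum1) drift (exprn_gt0 L cq_gt0) small.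
rewrite /pos_recurrent firstretE.
split; first by have := cvg_series_first_return P_ge0 P_sum1 bound; apply.
by have := is_cvg_series_mean_return P_ge0 P_sum1 bound; apply.
Qed.

End DesignChain.

Unset Implicit Arguments.

Theorem corollary1 (R : realType) (wo wm1 wm2 ws : R) :
  0 <= wo -> 0 <= wm1 -> 0 <= wm2 -> 0 <= ws ->
  wo + wm1 + wm2 + ws = 1 ->
  wm1 = wm2 ->
  (forall x1 x2 x3 : R,
     let u1 := 1 in let u2 := wo + wm1 in let u3 := wo + wm2 in let u4 := wo in
     u1 * x1 + u2 * x2 + u3 * x3 = u4 ->
     u2 * x1 + u1 * x2 + u4 * x3 = u3 ->
     u3 * x1 + u4 * x2 + u1 * x3 = u2 ->
     (`|x1| + `|x2| + `|x3| < 1 <-> wm1 < Cbound wo))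
  /\
  (forall (p q : R) (pi : stratum -> R),
     0 < q -> q < p -> p < 1 -> p + q = 1 ->
     (forall s, 0 < pi s) -> \sum_(s : stratum) pi s = 1 ->
     0 < ws -> wm1 < Cbound wo ->
     pos_rec_chain_period wo wm1 wm2 ws p q pi 2).
Proof.
move=> wo_ge0 wm1_ge0 wm2_ge0 ws_ge0 w_sum1 wm12; split.
  move=> x1 x2 x3 u1 u2 u3 u4; rewrite /u1 /u2 /u3 /u4 -wm12 !mul1r => eq1 eq2 eq3.
  rewrite lt_CboundE // (norm_solution_lt1 wo_ge0 _ _ eq1 eq2 eq3) ?lerDl //.
  by move: w_sum1 ws_ge0; rewrite wm12; lra.
move=> p q pi q_gt0 q_lt_p _ pq1 pi_gt0 pi_sum1 ws_gt0 _.
have [c c_gt0 c_le_pi] := pos_lower_bound pi_gt0.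
split; [|split].
- exact (design_irreducible wo wm1 wm2 ws q_gt0 q_lt_p pq1 pi_gt0 c_gt0 c_le_pi).
- exact (design_pos_recurrent wo_ge0 wm1_ge0 wm2_ge0 ws_gt0 w_sum1 q_gt0 q_lt_p pq1 pi_gt0 pi_sum1 c_gt0 c_le_pi).
- exact (design_period2 wo wm1 wm2 ws q_gt0 q_lt_p pq1 pi_gt0 c_gt0 c_le_pi).
Qed.
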